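(* In the standing setting, let $(\psi,\alpha)\in\mathcal{A}\times\mathcal{B}$ with lifting $\psi^\uparrow$. Then $(G,r)$, $(G,r')$, $(G,\widetilde r)$, $(G,\widetilde r')$ are set-theoretic non-degenerate solutions of the Yang--Baxter equation, where for $g,h\in G$: $$r(g,h)=\Big(\psi^\uparrow(g)\,h\,\psi^\uparrow(g)^{-1}\,\alpha(g,h),\ \psi^\uparrow(h)^{-1}\psi^\uparrow(g)\,h^{-1}\,\psi^\uparrow(g)^{-1}\,g\,\psi^\uparrow(g)\,h\,\psi^\uparrow(g)^{-1}\psi^\uparrow(h)\,\alpha(h^{-1},g)\Big);$$ $$r'(g,h)=\Big(g\,\psi^\uparrow(g)\,h\,\psi^\uparrow(g)^{-1}\,g^{-1}\,\alpha(g,h),\ \psi^\uparrow(h)^{-1}\,g\,\psi^\uparrow(h)\,\alpha(h^{-1},g)\Big);$$ $$\widetilde r(g,h)=\Big(\psi^\uparrow(g)^{-1}\,h\,\psi^\uparrow(g)\,\alpha(g^{-1},h),\ \psi^\uparrow(g)^{-1}\,h^{-1}\,\psi^\uparrow(g)\,g\,h\,\alpha(g,h)\Big);$$ $$\widetilde r'(g,h)=\Big(g\,h\,\psi^\uparrow(h)\,g^{-1}\,\psi^\uparrow(h)^{-1}\,\alpha(h,g^{-1}),\ \psi^\uparrow(h)\,g\,\psi^\uparrow(h)^{-1}\,\alpha(h,g)\Big).$$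
   Context: Standing setting: $(G,\cdot)$ is a group, $K$ is a subgroup of $G$ contained in the centre $Z(G)$, and $A$ is a subgroup with $K\le A\le G$ and $A/K$ abelian. Let $\mathcal{A}=\{\psi\in\operatorname{End}(G/K):\psi(G/K)\le A/K\}$. A lifting of $\psi\in\mathcal{A}$ is any set map $\psi^{\uparrow}:G\to A$ with $\psi^{\uparrow}(g)K=\psi(gK)$ for all $g\in G$. Let $\mathcal{B}$ be the set of maps $\alpha:G\times G\to K$ that are bilinear, i.e. $\alpha(gh,k)=\alpha(g,k)\alpha(h,k)$ and $\alpha(g,hk)=\alpha(g,h)\alpha(g,k)$, and satisfy $\alpha(k,g)=\alpha(g,k)=1$ for all $k\in K$, $g\in G$. A set-theoretic solution of the Yang--Baxter equation is a pair $(X,r)$ with $X\neq\emptyset$ and $r:X\times X\to X\times X$, $r(x,y)=(\sigma_x(y),\tau_y(x))$, a bijection satisfying $(r\times\mathrm{id}_X)(\mathrm{id}_X\times r)(r\times\mathrm{id}_X)=(\mathrm{id}_X\times r)(r\times\mathrm{id}_X)(\mathrm{id}_X\times r)$; it is non-degenerate if all $\sigma_x$ and $\tau_x$ are bijective. *)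

Set Implicit Arguments.

Section Defs.
Variable T : Type.
Variable mul : T -> T -> T.
Variable inv : T -> T.
Variable one : T.

Definition is_group : Prop :=
  (forall x y z, mul x (mul y z) = mul (mul x y) z) /\
  (forall x, mul one x = x) /\ (forall x, mul x one = x) /\
  (forall x, mul (inv x) x = one) /\ (forall x, mul x (inv x) = one).

Definition is_subgroup (H : T -> Prop) : Prop :=
  H one /\ (forall x y, H x -> H y -> H (mul x y)) /\ (forall x, H x -> H (inv x)).

Definition central (K : T -> Prop) : Prop := forall k g, K k -> mul k g = mul g k.

Definition same_coset (K : T -> Prop) (x y : T) : Prop := K (mul (inv x) y).

Definition quotient_abelian (K A : T -> Prop) : Prop :=
  forall a b, A a -> A b -> same_coset K (mul a b) (mul b a).

(* psi_up : G -> A is a lifting of some psi in End(G/K) with psi(G/K) <= A/K,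
   i.e. g |-> psi_up(g) K is a well-defined endomorphism of G/K. *)
Definition is_lifting_A (K A : T -> Prop) (psi_up : T -> T) : Prop :=
  (forall g, A (psi_up g)) /\
  (forall g h, same_coset K g h -> same_coset K (psi_up g) (psi_up h)) /\
  (forall g h, same_coset K (psi_up (mul g h)) (mul (psi_up g) (psi_up h))).

Definition is_in_B (K : T -> Prop) (alpha : T -> T -> T) : Prop :=
  (forall g h, K (alpha g h)) /\
  (forall g h k, alpha (mul g h) k = mul (alpha g k) (alpha h k)) /\
  (forall g h k, alpha g (mul h k) = mul (alpha g h) (alpha g k)) /\
  (forall k g, K k -> alpha k g = one /\ alpha g k = one).

Variable psi : T -> T.
Variable alpha : T -> T -> T.

Local Notation "x * y" := (mul x y).
Local Notation "x ^-1" := (inv x) (at level 3).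

Definition r_map (p : T * T) : T * T :=
  let (g, h) := p in
  (psi g * h * (psi g)^-1 * alpha g h,
   (psi h)^-1 * psi g * h^-1 * (psi g)^-1 * g * psi g * h * (psi g)^-1 * psi h
     * alpha (h^-1) g).

Definition r'_map (p : T * T) : T * T :=
  let (g, h) := p in
  (g * psi g * h * (psi g)^-1 * g^-1 * alpha g h,
   (psi h)^-1 * g * psi h * alpha (h^-1) g).

Definition rt_map (p : T * T) : T * T :=
  let (g, h) := p in
  ((psi g)^-1 * h * psi g * alpha (g^-1) h,
   (psi g)^-1 * h^-1 * psi g * g * h * alpha g h).

Definition rt'_map (p : T * T) : T * T :=
  let (g, h) := p in
  (g * h * psi h * g^-1 * (psi h)^-1 * alpha h (g^-1),
   psi h * g * (psi h)^-1 * alpha h g).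

End Defs.

Definition bij {X Y : Type} (f : X -> Y) : Prop :=
  exists g : Y -> X, (forall x, g (f x) = x) /\ (forall y, f (g y) = y).

Definition r12 {X : Type} (r : X * X -> X * X) (t : X * X * X) : X * X * X :=
  let '(x, y, z) := t in let (a, b) := r (x, y) in (a, b, z).
Definition r23 {X : Type} (r : X * X -> X * X) (t : X * X * X) : X * X * X :=
  let '(x, y, z) := t in let (b, c) := r (y, z) in (x, b, c).

Definition is_YBE_solution {X : Type} (r : X * X -> X * X) : Prop :=
  inhabited X /\ bij r /\
  (forall t, r12 r (r23 r (r12 r t)) = r23 r (r12 r (r23 r t))).

Definition non_degenerate {X : Type} (r : X * X -> X * X) : Prop :=
  forall x, bij (fun y => fst (r (x, y))) /\ bij (fun y => snd (r (y, x))).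

Definition is_nd_YBE_solution {X : Type} (r : X * X -> X * X) : Prop :=
  is_YBE_solution r /\ non_degenerate r.

From Stdlib Require Import FunctionalExtensionality.

(* Put lam x y := psi x * y * (psi x)^-1 * alpha x y.  Since psi is a homomorphism modulo the
   central subgroup K and alpha is bilinear with values in K (hence blind to conjugation),
   lam is an action of G on itself by automorphisms; it satisfies lam (lam x y) = lam y, and
   its image is commutative because psi takes values in A with A/K abelian.  For any such
   lam the four maps are given by lam-expressions in which r, r' and rt, rt' are mutually
   inverse pairs, so the braid relation only has to be checked for r and rt, and the inverse
   of a braided bijection is braided. *)

Section InversePair.
Variable X : Type.

Lemma r12_cancel {f g : X * X -> X * X} :
  (forall p, f (g p) = p) -> forall t, r12 f (r12 g t) = t.
Proof.
intros fg [[x y] z]; simpl.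
destruct (g (x, y)) as [a b] eqn:E; simpl.
now rewrite <- E, fg.
Qed.

Lemma r23_cancel {f g : X * X -> X * X} :
  (forall p, f (g p) = p) -> forall t, r23 f (r23 g t) = t.
Proof.
intros fg [[x y] z]; simpl.
destruct (g (y, z)) as [a b] eqn:E; simpl.
now rewrite <- E, fg.
Qed.

Variables r s : X * X -> X * X.
Hypothesis rs : forall p, r (s p) = p.
Hypothesis sr : forall p, s (r p) = p.

Lemma braid_inverse :
  (forall t, r12 r (r23 r (r12 r t)) = r23 r (r12 r (r23 r t))) ->
  forall t, r12 s (r23 s (r12 s t)) = r23 s (r12 s (r23 s t)).
Proof.
intros braid_r t.
set (u := r23 s (r12 s (r23 s t))).
assert (Eu : r23 r (r12 r (r23 r u)) = t).
{ unfold u. now rewrite (r23_cancel rs), (r12_cancel rs), (r23_cancel rs). }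
rewrite <- Eu, <- braid_r.
now rewrite (r12_cancel sr), (r23_cancel sr), (r12_cancel sr).
Qed.

Lemma YBE_solution_inverse_pair :
  inhabited X -> (forall t, r12 r (r23 r (r12 r t)) = r23 r (r12 r (r23 r t))) ->
  is_YBE_solution r /\ is_YBE_solution s.
Proof.
intros inh braid_r; split; split; auto; split.
- now exists s.
- exact braid_r.
- now exists r.
- now apply braid_inverse.
Qed.

End InversePair.

Section Group.
Variable T : Type.
Variable mul : T -> T -> T.
Variable inv : T -> T.
Variable one : T.
Local Notation "x * y" := (mul x y).
Local Notation "x ^-1" := (inv x) (at level 3).

Hypothesis mulgA : forall x y z, x * (y * z) = (x * y) * z.
Hypothesis mul1g : forall x, one * x = x.
Hypothesis mulg1 : forall x, x * one = x.
Hypothesis mulVg : forall x, x^-1 * x = one.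
Hypothesis mulgV : forall x, x * x^-1 = one.

Lemma mulgAr x y z : (x * y) * z = x * (y * z). Proof. now rewrite mulgA. Qed.
Lemma mulKVg x y : x * (x^-1 * y) = y. Proof. now rewrite mulgA, mulgV, mul1g. Qed.
Lemma mulKg x y : x^-1 * (x * y) = y. Proof. now rewrite mulgA, mulVg, mul1g. Qed.

Lemma invg_eq x y : x * y = one -> x^-1 = y.
Proof. intros xy. now rewrite <- (mulg1 x^-1), <- xy, mulKg. Qed.

Lemma invMg x y : (x * y)^-1 = y^-1 * x^-1.
Proof. apply invg_eq. now rewrite mulgAr, (mulgA y), mulgV, mul1g, mulgV. Qed.
Lemma invgK x : x^-1^-1 = x. Proof. apply invg_eq, mulVg. Qed.
Lemma invg1 : one^-1 = one. Proof. apply invg_eq, mul1g. Qed.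

Ltac gsimpl :=
  repeat progress rewrite ?mulgAr, ?mul1g, ?mulg1, ?mulVg, ?mulgV, ?mulKVg, ?mulKg,
                          ?invMg, ?invgK, ?invg1.

Section LambdaSolutions.
Variable lam : T -> T -> T.
Hypothesis lamM : forall x y z, lam x (y * z) = lam x y * lam x z.
Hypothesis lam_act : forall x y z, lam (x * y) z = lam x (lam y z).
Hypothesis lam1 : forall z, lam one z = z.
Hypothesis lamC : forall x y z, lam x (lam y z) = lam y (lam x z).
Hypothesis lam_lam : forall x y z, lam (lam x y) z = lam y z.

Lemma lamg1 x : lam x one = one.
Proof.
assert (idem : lam x one * lam x one = lam x one) by now rewrite <- lamM, mul1g.
now rewrite <- (mulKg (lam x one) (lam x one)), idem, mulVg.
Qed.

Lemma lamV x y : lam x y^-1 = (lam x y)^-1.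
Proof. symmetry; apply invg_eq. now rewrite <- lamM, mulgV, lamg1. Qed.

Lemma lamK x z : lam x^-1 (lam x z) = z. Proof. now rewrite <- lam_act, mulVg, lam1. Qed.
Lemma lamKV x z : lam x (lam x^-1 z) = z. Proof. now rewrite <- lam_act, mulgV, lam1. Qed.

Lemma lam_lamV x y z : lam (lam x y)^-1 z = lam y^-1 z.
Proof. now rewrite <- lamV, lam_lam. Qed.

Lemma lamCK x y z : lam x^-1 (lam y (lam x z)) = lam y z.
Proof. now rewrite (lamC y x), lamK. Qed.

Lemma lamCKV x y z : lam x (lam y (lam x^-1 z)) = lam y z.
Proof. now rewrite (lamC y x^-1), lamKV. Qed.

Ltac lsimpl :=
  repeat progress (gsimpl; rewrite ?lamM, ?lamV, ?lamg1, ?lam_act, ?lam_lam, ?lam_lamV,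
                                   ?lamK, ?lamKV, ?lamCK, ?lamCKV, ?lam1).

Definition lam_r (p : T * T) : T * T :=
  let (g, h) := p in (lam g h, lam h^-1 ((lam g h)^-1 * g * lam g h)).
Definition lam_r' (p : T * T) : T * T :=
  let (g, h) := p in (g * lam g h * g^-1, lam h^-1 g).
Definition lam_rt (p : T * T) : T * T :=
  let (g, h) := p in (lam g^-1 h, lam g^-1 h^-1 * g * h).
Definition lam_rt' (p : T * T) : T * T :=
  let (g, h) := p in (g * h * lam h g^-1, lam h g).

Lemma lam_r_braid t :
  r12 lam_r (r23 lam_r (r12 lam_r t)) = r23 lam_r (r12 lam_r (r23 lam_r t)).
Proof.
destruct t as [[x y] z]; unfold r12, r23, lam_r.
f_equal; [f_equal|]; lsimpl; reflexivity.
Qed.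

Lemma lam_rt_braid t :
  r12 lam_rt (r23 lam_rt (r12 lam_rt t)) = r23 lam_rt (r12 lam_rt (r23 lam_rt t)).
Proof.
destruct t as [[x y] z]; unfold r12, r23, lam_rt.
f_equal; [f_equal|]; lsimpl.
all: try reflexivity.
all: rewrite (lamC y^-1 x^-1 z); reflexivity.
Qed.

Lemma lam_r_r' p : lam_r (lam_r' p) = p.
Proof. destruct p as [x y]; unfold lam_r, lam_r'; f_equal; lsimpl; reflexivity. Qed.
Lemma lam_r'_r p : lam_r' (lam_r p) = p.
Proof. destruct p as [x y]; unfold lam_r, lam_r'; f_equal; lsimpl; reflexivity. Qed.
Lemma lam_rt_rt' p : lam_rt (lam_rt' p) = p.
Proof. destruct p as [x y]; unfold lam_rt, lam_rt'; f_equal; lsimpl; reflexivity. Qed.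
Lemma lam_rt'_rt p : lam_rt' (lam_rt p) = p.
Proof. destruct p as [x y]; unfold lam_rt, lam_rt'; f_equal; lsimpl; reflexivity. Qed.

Ltac bij_by f := exists f; split; intro; simpl; lsimpl; try reflexivity.

Lemma lam_r_nondeg : non_degenerate lam_r.
Proof.
intro x; split.
- bij_by (fun t => lam x^-1 t).
- bij_by (fun t => lam t x * lam x t * (lam t x)^-1).
  rewrite (lamC y x^-1 x). lsimpl. reflexivity.
Qed.

Lemma lam_r'_nondeg : non_degenerate lam_r'.
Proof.
intro x; split.
- bij_by (fun t => lam x^-1 (x^-1 * t * x)).
- bij_by (fun t => lam x t).
Qed.

Lemma lam_rt_nondeg : non_degenerate lam_rt.
Proof.
intro x; split.
- bij_by (fun t => lam x t).
- bij_by (fun t => lam t^-1 x * t * x^-1).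
Qed.

Lemma lam_rt'_nondeg : non_degenerate lam_rt'.
Proof.
intro x; split.
- bij_by (fun t => x^-1 * t * lam t x).
- bij_by (fun t => lam x^-1 t).
Qed.

Lemma lam_solutions :
  is_nd_YBE_solution lam_r /\ is_nd_YBE_solution lam_r' /\
  is_nd_YBE_solution lam_rt /\ is_nd_YBE_solution lam_rt'.
Proof.
destruct (YBE_solution_inverse_pair _ _ _ lam_r_r' lam_r'_r (inhabits one) lam_r_braid)
  as [Yr Yr'].
destruct (YBE_solution_inverse_pair _ _ _ lam_rt_rt' lam_rt'_rt (inhabits one) lam_rt_braid)
  as [Yrt Yrt'].
exact (conj (conj Yr lam_r_nondeg) (conj (conj Yr' lam_r'_nondeg)
       (conj (conj Yrt lam_rt_nondeg) (conj Yrt' lam_rt'_nondeg)))).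
Qed.

End LambdaSolutions.

Section CentralLambda.
Variables K A : T -> Prop.
Variable psi : T -> T.
Variable alpha : T -> T -> T.
Hypothesis K_subgroup : is_subgroup mul inv one K.
Hypothesis K_central : central mul K.
Hypothesis A_abelian_mod_K : quotient_abelian mul inv K A.
Hypothesis psi_lifting : is_lifting_A mul inv K A psi.
Hypothesis alpha_in_B : is_in_B mul one K alpha.

Lemma K1 : K one. Proof. apply K_subgroup. Qed.
Lemma KM x y : K x -> K y -> K (x * y). Proof. apply K_subgroup. Qed.
Lemma KV x : K x -> K x^-1. Proof. apply K_subgroup. Qed.

Lemma centralC k x : K k -> k * x = x * k. Proof. apply K_central. Qed.
Lemma centralCA k x y : K k -> k * (x * y) = x * (k * y).
Proof. intros Kk. now rewrite mulgA, (centralC k x Kk), mulgAr. Qed.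

Lemma conjg_coset p q y : K (p^-1 * q) -> p * y * p^-1 = q * y * q^-1.
Proof.
intros Kpq.
replace q with (p * (p^-1 * q)) by now rewrite mulKVg.
set (k := p^-1 * q) in *.
rewrite invMg; gsimpl.
now rewrite (centralCA k y _ Kpq), mulKVg.
Qed.

Lemma conjg_mulK u k g : K k -> (u * k)^-1 * g * (u * k) = u^-1 * g * u.
Proof.
intros Kk; rewrite invMg; gsimpl.
rewrite !(centralCA k^-1) by now apply KV.
now gsimpl.
Qed.

Lemma psi_mul_coset x y : K ((psi (x * y))^-1 * (psi x * psi y)).
Proof. apply psi_lifting. Qed.

Lemma psiK k : K k -> K (psi k).
Proof.
intros Kk.
assert (K1psi : K (psi one)).
{ generalize (psi_mul_coset one one); unfold same_coset. now rewrite mul1g, mulKg. }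
assert (Kpsi : K ((psi k)^-1 * psi one)).
{ apply psi_lifting; unfold same_coset. rewrite mulg1. now apply KV. }
replace (psi k) with (psi one * ((psi k)^-1 * psi one)^-1) 
  by (rewrite invMg, invgK; now gsimpl).
apply KM; [exact K1psi | now apply KV].
Qed.

Definition cpsi x y := psi x * y * (psi x)^-1.

Lemma cpsiM x y z : cpsi x (y * z) = cpsi x y * cpsi x z.
Proof. unfold cpsi; now gsimpl. Qed.

Lemma cpsi_act x y z : cpsi (x * y) z = cpsi x (cpsi y z).
Proof.
unfold cpsi; rewrite (conjg_coset _ (psi x * psi y)) by apply psi_mul_coset.
rewrite invMg; now gsimpl.
Qed.

Lemma cpsiC x y z : cpsi x (cpsi y z) = cpsi y (cpsi x z).
Proof.
rewrite <- !cpsi_act; unfold cpsi.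
rewrite !(conjg_coset (psi (x * y)) (psi x * psi y)),
  !(conjg_coset (psi (y * x)) (psi y * psi x)) by apply psi_mul_coset.
apply conjg_coset, A_abelian_mod_K; apply psi_lifting.
Qed.

Lemma cpsi_K k z : K k -> cpsi k z = z.
Proof. intros Kk; unfold cpsi. rewrite (centralC (psi k) z) by now apply psiK. now gsimpl. Qed.

Lemma cpsi_fix x k : K k -> cpsi x k = k.
Proof. intros Kk; unfold cpsi. rewrite <- (centralC k (psi x)) by exact Kk. now gsimpl. Qed.

Lemma cpsi_cpsi x y z : cpsi (cpsi x y) z = cpsi y z.
Proof.
unfold cpsi at 2; rewrite !cpsi_act, (cpsiC y), <- cpsi_act, mulgV.
apply cpsi_K, K1.
Qed.

Lemma cpsiV h w : cpsi h^-1 w = (psi h)^-1 * w * psi h.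
Proof.
transitivity (cpsi h^-1 (cpsi h ((psi h)^-1 * w * psi h))).
- f_equal; unfold cpsi; now gsimpl.
- now rewrite <- cpsi_act, mulVg, cpsi_K by apply K1.
Qed.

Lemma alphaK g h : K (alpha g h). Proof. apply alpha_in_B. Qed.
Lemma alphaMl g h k : alpha (g * h) k = alpha g k * alpha h k. Proof. apply alpha_in_B. Qed.
Lemma alphaMr g h k : alpha g (h * k) = alpha g h * alpha g k. Proof. apply alpha_in_B. Qed.
Lemma alpha_Kl k g : K k -> alpha k g = one.
Proof. intros Kk; exact (proj1 (proj2 (proj2 (proj2 alpha_in_B)) k g Kk)). Qed.
Lemma alpha_Kr k g : K k -> alpha g k = one.
Proof. intros Kk; exact (proj2 (proj2 (proj2 (proj2 alpha_in_B)) k g Kk)). Qed.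

Lemma alphaVl g h : alpha g^-1 h = (alpha g h)^-1.
Proof. symmetry; apply invg_eq. rewrite <- alphaMl, mulgV. apply alpha_Kl, K1. Qed.
Lemma alphaVr g h : alpha g h^-1 = (alpha g h)^-1.
Proof. symmetry; apply invg_eq. rewrite <- alphaMr, mulgV. apply alpha_Kr, K1. Qed.

Lemma alpha_conjl x p y : alpha (p * y * p^-1) x = alpha y x.
Proof. rewrite !alphaMl, alphaVl, (centralC (alpha p x)) by apply alphaK. now gsimpl. Qed.
Lemma alpha_conjr x p y : alpha x (p * y * p^-1) = alpha x y.
Proof. rewrite !alphaMr, alphaVr, (centralC (alpha x p)) by apply alphaK. now gsimpl. Qed.

Lemma alpha_conjVr x p y : alpha x (p^-1 * y * p) = alpha x y.
Proof. rewrite <- (alpha_conjr x p). f_equal; now gsimpl. Qed.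

Lemma alpha_cpsil x y z : alpha (cpsi y z) x = alpha z x.
Proof. apply alpha_conjl. Qed.
Lemma alpha_cpsir x y z : alpha x (cpsi y z) = alpha x z.
Proof. apply alpha_conjr. Qed.

Definition lam_psi x y := cpsi x y * alpha x y.

Lemma lam_psiM x y z : lam_psi x (y * z) = lam_psi x y * lam_psi x z.
Proof.
unfold lam_psi; rewrite cpsiM, alphaMr; gsimpl.
now rewrite (centralCA (alpha x y)) by apply alphaK.
Qed.

Lemma lam_psi_act x y z : lam_psi (x * y) z = lam_psi x (lam_psi y z).
Proof.
unfold lam_psi.
rewrite cpsi_act, cpsiM, alphaMl, alphaMr, (cpsi_fix x (alpha y z)), (alpha_Kr (alpha y z))
  by apply alphaK.
rewrite alpha_cpsir, mulg1; gsimpl.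
now rewrite (centralC (alpha x z)) by apply alphaK.
Qed.

Lemma lam_psi1 z : lam_psi one z = z.
Proof. unfold lam_psi; rewrite cpsi_K, alpha_Kl by apply K1. apply mulg1. Qed.

Lemma lam_psiC x y z : lam_psi x (lam_psi y z) = lam_psi y (lam_psi x z).
Proof.
rewrite <- !lam_psi_act; unfold lam_psi.
rewrite !cpsi_act, cpsiC, !alphaMl, (centralC (alpha x z)) by apply alphaK.
reflexivity.
Qed.

Lemma lam_psi_lam x y z : lam_psi (lam_psi x y) z = lam_psi y z.
Proof.
unfold lam_psi.
rewrite cpsi_act, cpsi_cpsi, (cpsi_K (alpha x y)), alphaMl, (alpha_Kl (alpha x y))
  by apply alphaK.
now rewrite alpha_cpsil, mulg1.
Qed.

Lemma r_map_lam_psi p : r_map mul inv psi alpha p = lam_r lam_psi p.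
Proof.
destruct p as [g h]; unfold r_map, lam_r, lam_psi; f_equal.
rewrite conjg_mulK by apply alphaK.
rewrite alpha_conjVr, cpsiV.
unfold cpsi; now gsimpl.
Qed.

Lemma r'_map_lam_psi p : r'_map mul inv psi alpha p = lam_r' lam_psi p.
Proof.
destruct p as [g h]; unfold r'_map, lam_r', lam_psi; f_equal.
- unfold cpsi; gsimpl. now rewrite (centralC (alpha g h) g^-1) by apply alphaK.
- now rewrite cpsiV.
Qed.

Lemma rt_map_lam_psi p : rt_map mul inv psi alpha p = lam_rt lam_psi p.
Proof.
destruct p as [g h]; unfold rt_map, lam_rt, lam_psi; f_equal.
- now rewrite cpsiV.
- rewrite cpsiV, alphaVl, alphaVr, invgK; gsimpl.
  now rewrite (centralCA (alpha g h) g h), (centralC (alpha g h) h) by apply alphaK.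
Qed.

Lemma rt'_map_lam_psi p : rt'_map mul inv psi alpha p = lam_rt' lam_psi p.
Proof. destruct p as [g h]; unfold rt'_map, lam_rt', lam_psi, cpsi; f_equal; now gsimpl. Qed.

Lemma psi_alpha_solutions :
  is_nd_YBE_solution (r_map mul inv psi alpha) /\
  is_nd_YBE_solution (r'_map mul inv psi alpha) /\
  is_nd_YBE_solution (rt_map mul inv psi alpha) /\
  is_nd_YBE_solution (rt'_map mul inv psi alpha).
Proof.
rewrite (functional_extensionality _ _ r_map_lam_psi),
  (functional_extensionality _ _ r'_map_lam_psi),
  (functional_extensionality _ _ rt_map_lam_psi),
  (functional_extensionality _ _ rt'_map_lam_psi).
exact (lam_solutions lam_psi lam_psiM lam_psi_act lam_psi1 lam_psiC lam_psi_lam).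
Qed.

End CentralLambda.
End Group.

Theorem mainTheorem15 (T : Type) (mul : T -> T -> T) (inv : T -> T) (one : T)
  (K A : T -> Prop) (psi_up : T -> T) (alpha : T -> T -> T) :
  is_group mul inv one ->
  is_subgroup mul inv one K -> central mul K ->
  is_subgroup mul inv one A -> (forall x, K x -> A x) ->
  quotient_abelian mul inv K A ->
  is_lifting_A mul inv K A psi_up ->
  is_in_B mul one K alpha ->
  is_nd_YBE_solution (r_map mul inv psi_up alpha) /\
  is_nd_YBE_solution (r'_map mul inv psi_up alpha) /\
  is_nd_YBE_solution (rt_map mul inv psi_up alpha) /\
  is_nd_YBE_solution (rt'_map mul inv psi_up alpha).
Proof.
(* Of the hypotheses on A only the fact that psi_up takes values in it is needed. *)
intros [mulgA [mul1g [mulg1 [mulVg mulgV]]]] K_subgroup K_central _ _.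
exact (psi_alpha_solutions _ _ _ _ mulgA mul1g mulg1 mulVg mulgV K A psi_up alpha
         K_subgroup K_central).
Qed.
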